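(* Let $\iota:\mathrm{Aut}(T,\mathbf r)\to\mathrm S_n$ send an automorphism $f$ to the permutation of $\underline n$ which, for each leaf $(1,L)$, maps $L$ onto $L'$, where $f(1,L)=(1,L')$, by the unique order-preserving bijection. Then $\iota$ is an injective group morphism into $\operatorname{Stab}_{W_{\mathfrak g}}(\mathbf U)$ whose image meets $W_{\mathfrak h_1}$ trivially and normalises it, and the resulting injective group morphism $$\mathrm{Aut}(T,\mathbf r)\ltimes W_{\mathfrak h_1}\to\operatorname{Stab}_{W_{\mathfrak g}}(\mathbf U),\qquad (f,w)\mapsto\iota(f)\,w,$$ is surjective.
   Context: Let $n\ge2$, $\mathfrak g=\mathfrak{sl}_n(\mathbb C)$, $\mathfrak t=\{x\in\mathbb C^n:\sum x_a=0\}$, $W_{\mathfrak g}=\mathrm S_n$ permuting coordinates. Fix $p\ge1$, $A_1,\dots,A_p\in\mathfrak t$. For $l\in\{1,\dots,p+1\}$ let $P_l$ be the partition of $\underline n=\{1,\dots,n\}$ in which $a,b$ lie in the same part iff $(A_j)_a=(A_j)_b$ for all $l\le j\le p$ ($P_{p+1}=\{\underline n\}$). $W_{\mathfrak h_1}=\prod_{L\in P_1}\mathrm S_L\subseteq\mathrm S_n$. $U_l=\{x\in\mathfrak t:x_a=x_b$ whenever $a,b$ in the same part of $P_l\}$, and $\operatorname{Stab}_{W_{\mathfrak g}}(\mathbf U)=\{w\in\mathrm S_n:w(U_l)\subseteq U_l\ \forall l\le p\}$ (the paper also denotes this group $\widetilde{\mathrm{Aut}}(T,\mathbf r)$). Ranked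 fission tree $(T,\mathbf r)$: nodes are pairs $(l,L)$, $L$ a part of $P_l$; root $(p+1,\underline n)$; parent of $(l,L)$ is $(l+1,L')$ with $L\subseteq L'\in P_{l+1}$; rank $\mathbf r(l,L)=|L|$. $\mathrm{Aut}(T,\mathbf r)$ is the group of bijections of the node set fixing the root, commuting with the parent map and preserving ranks. The semidirect product uses the action of $\mathrm{Aut}(T,\mathbf r)$ on $W_{\mathfrak h_1}$ by conjugation through $\iota$. *)

From mathcomp Require Import all_boot all_order all_algebra all_fingroup.
Set Implicit Arguments. Unset Strict Implicit. Unset Printing Implicit Defensive.
Import GRing.Theory Num.Theory.

Definition mkperm (T : finType) (g : T -> T) : {perm T} :=
  match injectiveP g with ReflectT h => perm h | ReflectF _ => 1%g end.

Section Fission.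
Variables (C : numClosedFieldType) (n p : nat) (A : 'I_p -> 'I_n -> C).

(* Levels are 0-based: level l : 'I_p.+1 is the paper's level l+1, and
   A j (j : 'I_p) is the paper's A_{j+1}.  a, b in the same part of P_{l+1}
   iff (A_j)_a = (A_j)_b for all paper-indices j >= l+1. *)
Definition same (l : 'I_p.+1) (a b : 'I_n) : bool :=
  [forall j : 'I_p, (l <= j)%N ==> (A j a == A j b)].

Definition part (l : 'I_p.+1) (a : 'I_n) : {set 'I_n} := [set b | same l a b].

Definition Ppart (l : 'I_p.+1) : {set {set 'I_n}} := [set part l a | a : 'I_n].

Definition Node := {x : 'I_p.+1 * {set 'I_n} | x.2 \in Ppart x.1}.

Definition level (x : Node) : 'I_p.+1 := (val x).1.
Definition block (x : Node) : {set 'I_n} := (val x).2.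
Definition rank (x : Node) : nat := #|block x|.

Definition is_root (x : Node) : bool := level x == ord_max.

Definition is_parent (x y : Node) : bool :=
  ((level y : nat) == (level x).+1) && (block x \subset block y).

(* The parent map (the root is sent to itself). *)
Definition parent (x : Node) : Node := odflt x [pick y : Node | is_parent x y].

Definition AutT : {set {perm Node}} :=
  [set f : {perm Node} |
     [&& [forall x, is_root x ==> (f x == x)],
         [forall x, f (parent x) == parent (f x)] &
         [forall x, rank (f x) == rank x]]].

Lemma part_in (l : 'I_p.+1) (a : 'I_n) : part l a \in Ppart l.
Proof. exact: imset_f. Qed.

Definition node_of (l : 'I_p.+1) (a : 'I_n) : Node :=
  exist (fun x : 'I_p.+1 * {set 'I_n} => x.2 \in Ppart x.1) (l, part l a) (part_in l a).

(* iotaT(f): on each leaf L (level 0, the paper's level 1), the unique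
   order-preserving bijection L -> L' where f(1,L) = (1,L'). *)
Definition iota_fun (f : {perm Node}) (a : 'I_n) : 'I_n :=
  let L := part ord0 a in
  let L' := block (f (node_of ord0 a)) in
  nth a (enum L') (index a (enum L)).

Definition iotaT (f : {perm Node}) : {perm 'I_n} := mkperm (iota_fun f).

Definition W1 : {set {perm 'I_n}} := [set w : {perm 'I_n} | [forall a, same ord0 (w a) a]].

Definition inU (l : 'I_p.+1) (x : 'I_n -> C) : Prop :=
  (\sum_(a < n) x a = 0)%R /\ (forall a b, same l a b -> x a = x b).

Definition permact (w : {perm 'I_n}) (x : 'I_n -> C) : 'I_n -> C :=
  fun a => x ((w^-1)%g a).

(* Stab_{W_g}(U): w(U_l) \subseteq U_l for all paper levels l <= p. *)
Definition Stab (w : {perm 'I_n}) : Prop :=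
  forall l : 'I_p.+1, (l < p)%N ->
    forall x : 'I_n -> C, inU l x -> inU l (permact w x).

(* Semidirect product AutT(T,r) |x W_{h_1}, action by conjugation through iotaT
   (MathComp conventions: w ^ g = g^-1 * w * g). *)
Definition sdmul (u v : {perm Node} * {perm 'I_n}) : {perm Node} * {perm 'I_n} :=
  ((u.1 * v.1)%g, ((u.2 ^ iotaT v.1) * v.2)%g).

Definition sdmap (u : {perm Node} * {perm 'I_n}) : {perm 'I_n} := (iotaT u.1 * u.2)%g.

End Fission.

Arguments iotaT [C n p] A f.
Arguments sdmul [C n p] A u v.
Arguments sdmap [C n p] A u.

From mathcomp Require Import all_boot all_order all_algebra all_fingroup zify.
Import GRing.Theory Num.Theory.
Set Implicit Arguments. Unset Strict Implicit. Unset Printing Implicit Defensive.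

(* An automorphism f of the fission tree fixes the root and commutes with the
   parent map, so it preserves the depth of a node (the number of parent steps
   up to the root), hence its level.  Every node (l, L) is reached from each
   leaf below it by l parent steps, so f (l, L) is the level-l node containing
   iota(f)(L): iota(f) maps every part of every P_l onto a part of P_l, which
   is what membership in Stab(U) amounts to, and f is determined by iota(f) up
   to W_{h_1}.  Conversely, U_l contains the centred indicator n 1_B - |B| of
   every part B of P_l; since n is invertible in C, w (U_l) <= U_l forces w to
   preserve P_l, and w then induces a tree automorphism f with
   iota(f)^-1 w in W_{h_1}. *)

Lemma perm_homo_mono (T : finType) (s : {perm T}) (r : rel T) :
  {homo s : x y / r x y} -> {mono s : x y / r x y}.
Proof.
move=> hom x y; apply/idP/idP; last exact: hom.
have homX k : {homo (s ^+ k)%g : x y / r x y}.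
  by elim: k => [|k IHk] u v; rewrite ?expg0 ?expgS ?perm1 ?permM // => /hom /IHk.
by move=> /(homX #[s]%g.-1); rewrite -invg_expg !permK.
Qed.

Section EnumTransport.
Variables (T : finType) (B B' : {set T}).
Hypothesis card_eq : #|B| = #|B'|.

Lemma index_enum_lt a : a \in B -> (index a (enum B) < size (enum B'))%N.
Proof. by rewrite -cardE -card_eq cardE index_mem mem_enum. Qed.

Lemma mem_nth_enum_index x0 a : a \in B -> nth x0 (enum B') (index a (enum B)) \in B'.
Proof. by move=> aB; rewrite -mem_enum mem_nth ?index_enum_lt. Qed.

Lemma index_nth_enum_index x0 a :
  a \in B -> index (nth x0 (enum B') (index a (enum B))) (enum B') = index a (enum B).
Proof. by move=> aB; rewrite index_uniq ?enum_uniq ?index_enum_lt. Qed.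

End EnumTransport.

Section FissionTree.
Variables (C : numClosedFieldType) (n p : nat) (A : 'I_p -> 'I_n -> C).

Local Notation same := (same A).
Local Notation part := (part A).
Local Notation Node := (Node A).
Local Notation node_of := (node_of A).
Local Notation parent := (@parent _ _ _ A).
Local Notation level := (@level _ _ _ A).
Local Notation block := (@block _ _ _ A).
Local Notation is_root := (@is_root _ _ _ A).
Local Notation leaf := (node_of ord0).

Lemma same_refl l : reflexive (same l).
Proof. by move=> a; apply/forallP => j; apply/implyP. Qed.

Lemma same_sym l : symmetric (same l).
Proof.
by move=> a b; apply/forallP/forallP => H j; apply/implyP => lj;
  move/implyP: (H j) => /(_ lj) /eqP ->.
Qed.

Lemma same_trans l : transitive (same l).
Proof.
move=> b a c /forallP Hab /forallP Hbc; apply/forallP => j; apply/implyP => lj.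
by move/implyP: (Hab j) => /(_ lj) /eqP ->; move/implyP: (Hbc j) => /(_ lj).
Qed.

Lemma same_le (l l' : 'I_p.+1) a b : (l <= l')%N -> same l a b -> same l' a b.
Proof.
move=> ll' /forallP H; apply/forallP => j; apply/implyP => l'j.
by move/implyP: (H j); apply; apply: leq_trans l'j.
Qed.

Lemma same_top (l : 'I_p.+1) a b : (p <= l)%N -> same l a b.
Proof.
move=> pl; apply/forallP => j; apply/implyP => lj.
by have := leq_trans pl lj; rewrite leqNgt ltn_ord.
Qed.

Lemma mem_part l a b : (b \in part l a) = same l a b.
Proof. by rewrite inE. Qed.

Lemma part_eqP l a b : reflect (part l a = part l b) (same l a b).
Proof.
apply: (iffP idP) => [ab | eq_ab]; last by rewrite -mem_part eq_ab mem_part same_refl.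
apply/setP => c; rewrite !mem_part; apply/idP/idP; last exact: same_trans.
by apply: same_trans; rewrite same_sym.
Qed.

Lemma level_node_of l a : level (node_of l a) = l.
Proof. by []. Qed.

Lemma block_node_of l a : block (node_of l a) = part l a.
Proof. by []. Qed.

Lemma mem_block_node_of l a : a \in block (node_of l a).
Proof. by rewrite mem_part same_refl. Qed.

Lemma block_eq_part (x : Node) a : a \in block x -> block x = part (level x) a.
Proof.
case: x => [[l L] /= Lpart]; rewrite /block /level /=.
by have /imsetP [b _ ->] := Lpart; rewrite mem_part => /part_eqP.
Qed.

Lemma node_eq (x y : Node) a :
  level x = level y -> a \in block x -> a \in block y -> x = y.
Proof.
move=> lxy /block_eq_part ax /block_eq_part ay; apply: val_inj.
rewrite [val x]surjective_pairing [val y]surjective_pairing; congr pair => //.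
by rewrite -[(val x).2]/(block x) -[(val y).2]/(block y) ax ay lxy.
Qed.

Lemma node_ofK (x : Node) a : a \in block x -> node_of (level x) a = x.
Proof. by move=> ax; apply: node_eq ax; rewrite ?mem_block_node_of. Qed.

Lemma node_cases (x : Node) : exists l a, x = node_of l a.
Proof.
case: x => [[l L] /= Lpart]; have /imsetP [a _ La] := Lpart.
by exists l, a; apply: val_inj; rewrite /= La.
Qed.

Lemma node_of_sameE l a b : (node_of l a == node_of l b) = same l a b.
Proof.
apply/eqP/idP => [/(congr1 block) | ab]; first by move/part_eqP.
by apply: node_eq (mem_block_node_of l a) _; rewrite // mem_part same_sym.
Qed.

Lemma parent_node_of (l l' : 'I_p.+1) a :
  l' = l.+1 :> nat -> parent (node_of l a) = node_of l' a.
Proof.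
move=> ll'; rewrite /parent; case: pickP => [y /andP [/eqP ly sub] | none] /=.
  have ay : a \in block y by apply: (subsetP sub); apply: mem_block_node_of.
  by rewrite -(node_ofK ay); congr node_of; apply: val_inj; rewrite /= ly ll'.
have /negP [] := none (node_of l' a).
rewrite /is_parent ll' eqxx; apply/subsetP => b; rewrite !mem_part.
by apply: same_le; rewrite ll'.
Qed.

Lemma parent_top (x : Node) : (p <= level x)%N -> parent x = x.
Proof.
move=> px; rewrite /parent; case: pickP => [y /andP [/eqP ly _] | //].
by have := ltn_ord (level y); rewrite ly ltnS ltnNge px.
Qed.

Lemma level_parent (x : Node) : (level (parent x) : nat) = minn p (level x).+1.
Proof.
have [l [a ->]] := node_cases x; rewrite level_node_of.
case: (ltnP l p) => lp.
  by rewrite (@parent_node_of l (Ordinal (lp : l.+1 < p.+1)%N)) // level_node_of /=; lia.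
by rewrite parent_top level_node_of //; have := ltn_ord l; lia.
Qed.

Lemma mem_block_parent (x : Node) a : a \in block x -> a \in block (parent x).
Proof.
move=> /node_ofK <-; case: (ltnP (level x) p) => lp.
  by rewrite (@parent_node_of _ (Ordinal (lp : (level x).+1 < p.+1)%N)) ?mem_block_node_of.
by rewrite parent_top ?mem_block_node_of.
Qed.

Lemma level_iter_parent k (x : Node) :
  (level (iter k parent x) : nat) = minn p (level x + k).
Proof.
elim: k => [|k IHk] /=; first by have := ltn_ord (level x); lia.
by rewrite level_parent IHk; lia.
Qed.

Lemma is_rootE (x : Node) : is_root x = (p <= level x)%N.
Proof. by rewrite /is_root -val_eqE /= eqn_leq -ltnS ltn_ord. Qed.

Lemma is_root_iter_parent k (x : Node) : is_root (iter k parent x) = (p <= level x + k)%N.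
Proof. by rewrite is_rootE level_iter_parent; lia. Qed.

Lemma mem_block_root (x : Node) a : is_root x -> a \in block x.
Proof.
by have [l [b ->]] := node_cases x; rewrite is_rootE => pl; rewrite mem_part same_top.
Qed.

Lemma iter_parent_leaf (l : 'I_p.+1) a : iter l parent (leaf a) = node_of l a.
Proof.
have a_iter : a \in block (iter l parent (leaf a)).
  by elim: (nat_of_ord l) => [|k IHk] /=; [apply: mem_block_node_of | apply: mem_block_parent].
rewrite -(node_ofK a_iter); congr node_of; apply: ord_inj.
by rewrite level_iter_parent /=; have := ltn_ord l; lia.
Qed.

Section Automorphism.
Variable f : {perm Node}.
Hypothesis fA : f \in AutT A.

Lemma AutT_root x : is_root x -> f x = x.
Proof.
by move: fA; rewrite inE => /and3P [/forallP root_fixed _ _] /(implyP (root_fixed x)) /eqP.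
Qed.

Lemma AutT_parent x : f (parent x) = parent (f x).
Proof.
by move: fA; rewrite inE => /and3P [_ /forallP parentC _]; apply/eqP; exact: parentC.
Qed.

Lemma AutT_card_block x : #|block (f x)| = #|block x|.
Proof.
by move: fA; rewrite inE => /and3P [_ _ /forallP rank_eq]; apply/eqP; exact: rank_eq.
Qed.

Lemma AutT_iter_parent k x : f (iter k parent x) = iter k parent (f x).
Proof. by elim: k => //= k <-; apply: AutT_parent. Qed.

Lemma AutT_is_root x : is_root (f x) = is_root x.
Proof.
apply/idP/idP => [root_fx | /AutT_root -> //].
by rewrite -(perm_inj (AutT_root root_fx)).
Qed.

Lemma AutT_level x : level (f x) = level x.
Proof.
have depth k : (p <= level (f x) + k)%N = (p <= level x + k)%N.
  by rewrite -!is_root_iter_parent -AutT_iter_parent AutT_is_root.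
have := depth (p - level x); have := depth (p - level (f x)).
have := ltn_ord (level x); have := ltn_ord (level (f x)).
by move=> *; apply: ord_inj; lia.
Qed.

Lemma iota_fun_mem a : iota_fun f a \in block (f (leaf a)).
Proof. by apply: mem_nth_enum_index; rewrite ?AutT_card_block ?mem_block_node_of. Qed.

Lemma AutT_leaf a : f (leaf a) = leaf (iota_fun f a).
Proof. by rewrite -(node_ofK (iota_fun_mem a)) AutT_level. Qed.

Lemma iota_fun_inj : injective (iota_fun f).
Proof.
move=> a b eq_ab.
have leaf_ab : leaf a = leaf b.
  by apply: (@perm_inj _ f); rewrite !AutT_leaf eq_ab.
have part_ab : part ord0 a = part ord0 b by rewrite -!block_node_of leaf_ab.
have bL : b \in part ord0 a by rewrite part_ab mem_block_node_of.
apply: (@index_inj _ a (enum (part ord0 a))); rewrite ?mem_enum ?mem_block_node_of //.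
have card_L : #|part ord0 a| = #|block (f (leaf a))| by rewrite AutT_card_block.
rewrite -(index_nth_enum_index card_L a (mem_block_node_of _ _)).
rewrite -(index_nth_enum_index card_L b bL).
have iota_b : iota_fun f b = nth b (enum (block (f (leaf a)))) (index b (enum (part ord0 a))).
  by rewrite /iota_fun leaf_ab part_ab.
by rewrite -iota_b -eq_ab /iota_fun.
Qed.

Lemma iotaTE : iotaT A f =1 iota_fun f.
Proof.
rewrite /iotaT /mkperm; case: injectiveP => [? a | []]; last exact: iota_fun_inj.
by rewrite permE.
Qed.

Lemma AutT_node_of l a : f (node_of l a) = node_of l (iotaT A f a).
Proof. by rewrite -!(iter_parent_leaf l) AutT_iter_parent iotaTE AutT_leaf. Qed.

Lemma same_iotaT l : {mono iotaT A f : a b / same l a b}.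
Proof. by move=> a b; rewrite -!node_of_sameE -!AutT_node_of (inj_eq perm_inj). Qed.

End Automorphism.

Lemma AutT1 : 1%g \in AutT A.
Proof.
by rewrite inE; apply/and3P; split; apply/forallP => x; rewrite ?perm1 ?eqxx ?implybT.
Qed.

Lemma AutT_mul f g : f \in AutT A -> g \in AutT A -> (f * g)%g \in AutT A.
Proof.
move=> fA gA; rewrite inE; apply/and3P; split; apply/forallP => x; rewrite !permM.
- by apply/implyP => root_x; rewrite !AutT_root.
- by rewrite (AutT_parent fA) (AutT_parent gA).
- by rewrite /rank (AutT_card_block gA) (AutT_card_block fA).
Qed.

Lemma iotaT1 : iotaT A 1 = 1%g.
Proof.
apply/permP => a; rewrite (iotaTE AutT1) perm1 /iota_fun perm1.
by rewrite nth_index // mem_enum mem_block_node_of.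
Qed.

Lemma iotaTM f g : f \in AutT A -> g \in AutT A ->
  iotaT A (f * g) = (iotaT A f * iotaT A g)%g.
Proof.
move=> fA gA; apply/permP => a; rewrite permM !iotaTE ?AutT_mul //.
set b := iota_fun f a.
have leaf_b : f (leaf a) = leaf b := AutT_leaf fA a.
have card_a : #|part ord0 a| = #|block (f (leaf a))| by rewrite AutT_card_block.
have index_b : index b (enum (part ord0 b)) = index a (enum (part ord0 a)).
  by rewrite -block_node_of -leaf_b index_nth_enum_index ?mem_block_node_of.
rewrite [RHS]/iota_fun index_b /iota_fun permM leaf_b; apply: set_nth_default.
by rewrite -index_b index_enum_lt ?AutT_card_block ?mem_block_node_of.
Qed.

Lemma AutT_eq f g : f \in AutT A -> g \in AutT A ->
  (forall a, same ord0 (iotaT A f a) (iotaT A g a)) -> f = g.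
Proof.
move=> fA gA same_fg; apply/permP => x; have [l [a ->]] := node_cases x.
rewrite (AutT_node_of fA) (AutT_node_of gA); apply/eqP.
by rewrite node_of_sameE (same_le _ (same_fg a)).
Qed.

Lemma Stab_of_same_mono (w : {perm 'I_n}) :
  (forall l, {mono w : a b / same l a b}) -> Stab A w.
Proof.
move=> w_same l _ x [sum_x x_const]; split.
  by rewrite /permact (reindex_inj (@perm_inj _ w)); under eq_bigr do rewrite permK.
by move=> a b ab; apply: x_const; rewrite -w_same !permKV.
Qed.

Lemma iotaT_Stab f : f \in AutT A -> Stab A (iotaT A f).
Proof. by move=> fA; apply: Stab_of_same_mono => l; apply: same_iotaT. Qed.

Definition centred_indicator (B : {set 'I_n}) : 'I_n -> C :=
  fun e => (n%:R * (if e \in B then 1 else 0) - #|B|%:R)%R.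

Lemma inU_centred_indicator l a : inU A l (centred_indicator (part l a)).
Proof.
split.
  rewrite big_split /= sumrN -mulr_sumr -big_mkcond /= !sumr_const card_ord.
  by rewrite mulrC mulr_natr subrr.
move=> b c bc; rewrite /centred_indicator !mem_part.
suff -> : same l a b = same l a c by [].
apply/idP/idP => ?; first exact: (@same_trans l b).
by apply: (@same_trans l c); rewrite // same_sym.
Qed.

Lemma same_mono_of_Stab (w : {perm 'I_n}) :
  (0 < n)%N -> Stab A w -> forall l, {mono w : a b / same l a b}.
Proof.
move=> n_gt0 w_stab l.
suff same_inv : {homo (w^-1)%g : a b / same l a b}.
  by move=> a b; rewrite -(perm_homo_mono same_inv) !permK.
move=> a b ab; case: (ltnP l p) => lp; last exact: same_top.
have := (w_stab l lp _ (inU_centred_indicator l ((w^-1)%g a))).2 a b ab.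
rewrite /permact /centred_indicator !mem_part same_refl => /addIr /mulfI.
rewrite pnatr_eq0 -lt0n n_gt0 => /(_ isT).
by case: same => // /eqP; rewrite oner_eq0.
Qed.

Section InducedAutomorphism.
Variable w : {perm 'I_n}.
Hypothesis w_same : forall l, {mono w : a b / same l a b}.

Lemma imset_part l a : w @: part l a = part l (w a).
Proof.
apply/setP => b; rewrite mem_part; apply/imsetP/idP => [[c ac ->] | ab].
  by rewrite w_same -mem_part.
by exists ((w^-1)%g b); rewrite ?permKV // mem_part -w_same permKV.
Qed.

Definition node_map (x : Node) : Node := insubd x (level x, w @: block x).

Lemma node_mapE (x : Node) a : a \in block x -> node_map x = node_of (level x) (w a).
Proof.
move=> /node_ofK <-; apply: val_inj; rewrite /node_map insubdK /= imset_part //.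
exact: part_in.
Qed.

Lemma node_map_inj : injective node_map.
Proof.
move=> x y; have [l [a ->]] := node_cases x; have [l' [b ->]] := node_cases y.
rewrite !(node_mapE (mem_block_node_of _ _)) => eq_xy.
have ll' : l = l' := congr1 level eq_xy.
by move: eq_xy; rewrite -ll' => /eqP; rewrite node_of_sameE w_same -node_of_sameE => /eqP.
Qed.

Definition node_perm : {perm Node} := perm node_map_inj.

Lemma node_permE (x : Node) a : a \in block x -> node_perm x = node_of (level x) (w a).
Proof. by rewrite permE; apply: node_mapE. Qed.

Lemma node_perm_AutT : node_perm \in AutT A.
Proof.
have [perm_level perm_mem] : (forall x, level (node_perm x) = level x) /\
    (forall x a, a \in block x -> w a \in block (node_perm x)).
  split=> [x | x a ax]; last by rewrite (node_permE ax) mem_block_node_of.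
  by have [l [a ->]] := node_cases x; rewrite (node_permE (mem_block_node_of _ _)).
rewrite inE; apply/and3P; split; apply/forallP => x; have [l [a ->]] := node_cases x.
- apply/implyP => root_x.
  by apply/eqP/(node_eq (a := w a)); rewrite ?perm_level ?perm_mem ?mem_block_root.
- apply/eqP/(node_eq (a := w a));
    rewrite ?perm_mem ?mem_block_parent ?perm_mem ?mem_block_node_of //.
  by rewrite perm_level; apply: ord_inj; rewrite !level_parent perm_level.
- apply/eqP; rewrite /rank (node_permE (mem_block_node_of _ _)) !block_node_of -imset_part.
  by rewrite card_imset //; apply: perm_inj.
Qed.

Lemma same_iotaT_node_perm a : same ord0 (iotaT A node_perm a) (w a).
Proof.
have := AutT_node_of node_perm_AutT ord0 a.
by rewrite (node_permE (mem_block_node_of _ _)) => /eqP; rewrite node_of_sameE same_sym.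
Qed.

End InducedAutomorphism.

Lemma W1_conj (s : {perm 'I_n}) : {mono s : a b / same ord0 a b} -> (W1 A :^ s)%g = W1 A.
Proof.
move=> s_same.
have W1J u : u \in W1 A -> (u ^ s)%g \in W1 A.
  rewrite !inE => /forallP u_same; apply/forallP => a.
  by rewrite conjgE !permM -{2}(permKV s a) s_same.
apply/eqP; rewrite eqEcard cardJg leqnn andbT.
by apply/subsetP => u; rewrite mem_conjg => /W1J; rewrite conjgKV.
Qed.

Lemma iotaT_W1_trivial : (iotaT A @: AutT A :&: W1 A \subset [1])%g.
Proof.
apply/subsetP => u; rewrite inE => /andP [/imsetP [f fA ->]].
rewrite inE => /forallP iota_same; suff -> : f = 1%g by rewrite iotaT1 inE.
by apply: AutT_eq => //; [apply: AutT1 | move=> a; rewrite iotaT1 perm1].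
Qed.

Lemma sdmapM : {in setX (AutT A) (W1 A) &,
  {morph sdmap A : u v / sdmul A u v >-> (u * v)%g}}.
Proof.
move=> [f u] [g v]; rewrite !in_setX => /andP [fA _] /andP [gA _].
by rewrite /sdmap /sdmul /= iotaTM // conjgE !mulgA mulgK.
Qed.

Lemma sdmap_inj : {in setX (AutT A) (W1 A) &, injective (sdmap A)}.
Proof.
move=> [f u] [g v]; rewrite !in_setX /sdmap /= => /andP [fA uW] /andP [gA vW] eq_fu_gv.
suff eq_fg : f = g by rewrite -eq_fg in eq_fu_gv *; congr pair; apply: mulgI eq_fu_gv.
move: uW vW; rewrite !inE => /forallP u_same /forallP v_same.
apply: AutT_eq => // a; apply: (@same_trans _ (u (iotaT A f a))); first by rewrite same_sym.
by rewrite -permM eq_fu_gv permM.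
Qed.

Lemma sdmap_onto (w : {perm 'I_n}) : (0 < n)%N -> Stab A w ->
  exists2 u, u \in setX (AutT A) (W1 A) & sdmap A u = w.
Proof.
move=> n_gt0 /(same_mono_of_Stab n_gt0) w_same.
exists (node_perm w_same, ((iotaT A (node_perm w_same))^-1 * w)%g); last first.
  by rewrite /sdmap mulKVg.
rewrite in_setX node_perm_AutT inE; apply/forallP => a.
rewrite permM -{2}(permKV (iotaT A (node_perm w_same)) a) same_sym.
exact: same_iotaT_node_perm.
Qed.

End FissionTree.

Theorem proposition4p15 (C : numClosedFieldType) (n p : nat)
  (A : 'I_p -> 'I_n -> C) :
  (2 <= n)%N -> (1 <= p)%N ->
  (forall j : 'I_p, (\sum_(a < n) A j a = 0)%R) ->
  (* iotaT is an injective group morphism AutT(T,r) -> Stab(U) *)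
  {in AutT A &, {morph iotaT A : f g / (f * g)%g}} /\
  {in AutT A &, injective (iotaT A)} /\
  {in AutT A, forall f, Stab A (iotaT A f)} /\
  (* its image meets W_{h_1} trivially and normalises it *)
  ((iotaT A @: AutT A) :&: W1 A \subset [1])%g /\
  {in AutT A, forall f, (W1 A :^ iotaT A f)%g = W1 A} /\
  (* the map AutT |x W_{h_1} -> Stab(U), (f,w) |-> iotaT(f) w, is an injective
     group morphism, and it is surjective *)
  {in setX (AutT A) (W1 A) &, {morph sdmap A : u v / sdmul A u v >-> (u * v)%g}} /\
  {in setX (AutT A) (W1 A) &, injective (sdmap A)} /\
  (forall w : {perm 'I_n}, Stab A w ->
     exists2 u, u \in setX (AutT A) (W1 A) & sdmap A u = w).
Proof.
move=> n_ge2 _ _; have n_gt0 : (0 < n)%N by apply: leq_trans n_ge2.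
split; first exact: iotaTM.
split.
  move=> f g fA gA eq_fg; apply: AutT_eq => // a.
  by rewrite eq_fg same_refl.
split; first exact: iotaT_Stab.
split; first exact: iotaT_W1_trivial.
split; first by move=> f fA; apply/W1_conj/same_iotaT.
split; first exact: sdmapM.
split; first exact: sdmap_inj.
by move=> w; apply: sdmap_onto.
Qed.
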